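(* Fix $\epsilon\in(0,1)$. Let $G=(V,E)$ be an unweighted simple graph on $n$ vertices with minimum degree $d$ and minimum cut value $c$. Let $\mathcal{C}$ be the set of all non-singleton cuts of $G$ with cut value at most $c+\epsilon d$. Then the number of edges participating in some cut of $\mathcal{C}$, i.e. $\left|\bigcup_{C\in\mathcal{C}} C\right|$, is $O(n)$, where the implied constant depends only on $\epsilon$.
   Context: A cut is identified with the set of edges between $S$ and $V\setminus S$ for some $\emptyset\neq S\subsetneq V$; its value is the number of such edges. A cut is non-singleton if both $S$ and $V\setminus S$ contain at least two vertices. The minimum cut value is the minimum value over all cuts. *)

From HB Require Import structures.
From mathcomp Require Import all_boot all_order all_algebra.
From mathcomp Require Export reals.
Set Implicit Arguments. Unset Strict Implicit. Unset Printing Implicit Defensive.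

Definition simple_graph (T : finType) (e : rel T) : Prop :=
  symmetric e /\ irreflexive e.

Definition edges (T : finType) (e : rel T) : {set {set T}} :=
  [set [set x; y] | x in T, y in T & e x y].

Definition cut (T : finType) (e : rel T) (S : {set T}) : {set {set T}} :=
  [set f in edges e | #|f :&: S| == 1%N].

Definition is_cut_side (T : finType) (S : {set T}) : bool :=
  (S != set0) && (S != [set: T]).

Definition nonsingleton (T : finType) (S : {set T}) : bool :=
  (1 < #|S|)%N && (1 < #|~: S|)%N.

Definition degree (T : finType) (e : rel T) (x : T) : nat := #|[set y | e x y]|.

Definition is_min_degree (T : finType) (e : rel T) (d : nat) : Prop :=
  (exists x, degree e x = d) /\ (forall x, (d <= degree e x)%N).

Definition is_min_cut_value (T : finType) (e : rel T) (c : nat) : Prop :=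
  (exists S : {set T}, is_cut_side S /\ #|cut e S| = c) /\
  (forall S : {set T}, is_cut_side S -> (c <= #|cut e S|)%N).

(* Pick k >= 2 with 4 <= k (1 - eps); every cut S in question then satisfies
   k |dS| + 4d <= k (c + d), in particular |dS| <= 2d.  Put t = max(1, d/k) and
   let E(P) be the edges of such cuts with both ends in P.  If some such cut S
   splits P into two parts of size >= t, then E(P) is covered by the E of the
   parts and dS, and the boundaries of the parts have total size at most
   |dP| + 2|dS|.  Otherwise each edge of E(P) has an end x on a side A of its
   cut with |P n A| < t; moving x out of A leaves a cut, so minimality of c
   gives deg x <= k |N(x) \ P|, and E(P) is charged to the boundary dP.
   Induction on |P| yields t |E(P)| + a t <= t k |dP| + a |P| for
   a = 2d (2k + 1), and P = V gives |E(V)| <= 4k (2k + 1) n. *)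

From HB Require Import structures.
From mathcomp Require Import all_boot all_order all_algebra.
From mathcomp Require Import reals.
From mathcomp Require Import zify lra.
Import Order.TTheory GRing.Theory Num.Theory.

Set Implicit Arguments. Unset Strict Implicit. Unset Printing Implicit Defensive.

Lemma leq_card_bigcup (I U : finType) (P : pred I) (B : I -> {set U}) :
  #|\bigcup_(i | P i) B i| <= \sum_(i | P i) #|B i|.
Proof.
elim/big_rec2: _ => [|i A n _ IH]; first by rewrite cards0.
exact: leq_trans (leq_card_setU _ _) (leq_add _ IH).
Qed.

Lemma card_sep_sum (U : finType) (A : {set U}) (p : pred U) :
  #|[set x in A | p x]| = \sum_(x in A) p x.
Proof.
rewrite -sum1_card [RHS]big_mkcond [LHS]big_mkcond /=.
by apply: eq_bigr => x _; rewrite !inE; case: (x \in A); case: (p x).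
Qed.

Lemma is_cut_side1 (T : finType) (S : {set T}) (x : T) :
  is_cut_side S -> is_cut_side [set x].
Proof.
case/andP => /set0Pn[y yS] /negP ST; apply/andP; split.
  by apply/set0Pn; exists x; rewrite set11.
apply/negP => /eqP x1; apply: ST; apply/eqP/setP => z.
have /set1P-> : z \in [set x] by rewrite x1.
have /set1P<- : y \in [set x] by rewrite x1.
by rewrite yS inE.
Qed.

Section SimpleGraph.
Variables (T : finType) (e : rel T).
Hypotheses (esym : symmetric e) (eirr : irreflexive e).

Definition nbhd (x : T) : {set T} := [set y | e x y].

Lemma edge_neq (a b : T) : e a b -> a != b.
Proof. by apply: contraTneq => ->; rewrite eirr. Qed.

Lemma edgesP (f : {set T}) : reflect (exists a b, e a b /\ f = [set a; b]) (f \in edges e).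
Proof.
apply: (iffP imset2P) => [[a b _] | [a [b [hab ->]]]].
  by rewrite inE => hab ->; exists a, b.
by exists a b => //; rewrite inE.
Qed.

Lemma pair_in_cut (a b : T) (S : {set T}) :
  e a b -> ([set a; b] \in cut e S) = ((a \in S) != (b \in S)).
Proof.
rewrite /cut inE.
move=> hab; have ba : a \notin [set b] by rewrite inE edge_neq.
have -> : [set a; b] :&: S = [set z in [set a; b] | z \in S].
  by apply/setP => z; rewrite !inE.
have -> : [set a; b] \in edges e by apply/edgesP; exists a, b.
rewrite card_sep_sum big_setU1 //= big_set1.
by case: (a \in S); case: (b \in S).
Qed.

Lemma cut_edges (S : {set T}) : cut e S \subset edges e.
Proof. by apply/subsetP => f; rewrite inE => /andP[]. Qed.

Lemma cutP (f S : {set T}) :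
  reflect (exists a b, [/\ e a b, f = [set a; b], a \in S & b \notin S])
          (f \in cut e S).
Proof.
apply: (iffP idP) => [fS | [a [b [hab -> aS bS]]]]; last first.
  by rewrite pair_in_cut // aS bS.
case/edgesP: (subsetP (cut_edges S) f fS) => a [b [hab Ef]].
move: fS; rewrite Ef pair_in_cut //.
case aS: (a \in S); case bS: (b \in S) => //= _.
  by exists a, b; rewrite aS bS.
by exists b, a; rewrite esym aS bS setUC.
Qed.

Lemma cutC (S : {set T}) : cut e (~: S) = cut e S.
Proof.
apply/setP => f; case: (boolP (f \in edges e)) => [/edgesP[a [b [hab ->]]]|fE].
  by rewrite !pair_in_cut // !inE; case: (a \in S); case: (b \in S).
by apply/idP/idP => /(subsetP (cut_edges _)); rewrite (negbTE fE).
Qed.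

Lemma card_cut_at (S : {set T}) (x : T) : x \in S ->
  #|[set f in cut e S | x \in f]| = #|nbhd x :\: S|.
Proof.
move=> xS; have -> : [set f in cut e S | x \in f] = [set [set x; y] | y in nbhd x :\: S].
  apply/setP => f; apply/setIdP/imsetP => [[]|[y]].
    case/cutP => a [b [hab -> aS bS]] /set2P[] xab; subst x.
      by exists b; rewrite // !inE hab bS.
    by rewrite xS in bS.
  move=> /setDP[hxy yS] ->; rewrite inE in hxy.
  by rewrite pair_in_cut // xS yS set21.
apply: card_in_imset => y1 y2; rewrite !inE => /andP[_ h1] _ E.
have /set2P[x1|//] : y1 \in [set x; y2] by rewrite -E set22.
by move: h1; rewrite x1 eirr.
Qed.

Lemma card_cut1 (x : T) : #|cut e [set x]| = degree e x.
Proof.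
have -> : cut e [set x] = [set f in cut e [set x] | x \in f].
  apply/setP => f; rewrite inE; apply/idP/andP => [fx|[]//]; split=> //.
  by case/cutP: fx => a [b [_ -> /set1P-> _]]; rewrite set21.
rewrite card_cut_at ?set11 //; apply: eq_card => y.
by rewrite !inE andb_idl // => /edge_neq; rewrite eq_sym.
Qed.

Lemma edge_in_cut1 (x : T) (f : {set T}) : f \in edges e -> x \in f -> f \in cut e [set x].
Proof.
case/edgesP => a [b [hab ->]] /set2P[]->; rewrite pair_in_cut // !inE eqxx.
  by rewrite [b == a]eq_sym (negbTE (edge_neq hab)).
by rewrite (negbTE (edge_neq hab)).
Qed.

Lemma card_cutD1 (A : {set T}) (x : T) : x \in A ->
  #|cut e (A :\ x)| + #|nbhd x :\: A| = #|cut e A| + #|nbhd x :&: A|.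
Proof.
move=> xA.
have away_x : #|[set f in cut e A | x \notin f]| = #|[set f in cut e (A :\ x) | x \notin f]|.
  apply: eq_card => f; rewrite !inE andbC [RHS]andbC; apply: andb_id2l => xf.
  suff -> : f :&: (A :\ x) = f :&: A by [].
  by apply/setP => z; rewrite !inE; case: (z =P x) => // ->; rewrite (negbTE xf).
have at_x : #|[set f in cut e (A :\ x) | x \in f]| = #|nbhd x :&: A|.
  rewrite -cutC card_cut_at; last by rewrite !inE eqxx.
  apply: eq_card => y; rewrite !inE negbK andbC.
  by case: eqP => // ->; rewrite eirr.
have by_x (B : {set {set T}}) :
    #|B| = #|[set f in B | x \in f]| + #|[set f in B | x \notin f]|.
  rewrite -(cardsID [set f : {set T} | x \in f] B).
  by congr (_ + _); apply: eq_card => f; rewrite !inE andbC.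
rewrite (by_x (cut e A)) (by_x (cut e (A :\ x))) at_x card_cut_at // away_x; lia.
Qed.

Lemma card_cutI_cutD (P A : {set T}) :
  #|cut e (P :&: A)| + #|cut e (P :\: A)| <= #|cut e P| + 2 * #|cut e A|.
Proof.
have pairE (S f : {set T}) : f \in cut e S -> exists a b, e a b /\ f = [set a; b].
  by move/(subsetP (cut_edges S))/edgesP.
have sU : cut e (P :&: A) :|: cut e (P :\: A) \subset cut e P :|: cut e A.
  apply/subsetP => f fU.
  have [a [b [hab Ef]]] : exists a b, e a b /\ f = [set a; b] by case/setUP: fU => /pairE.
  move: fU; rewrite Ef !in_setU !pair_in_cut // !inE.
  by case: (a \in P); case: (a \in A); case: (b \in P); case: (b \in A).
have sI : cut e (P :&: A) :&: cut e (P :\: A) \subset cut e A.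
  apply/subsetP => f fI; have [a [b [hab Ef]]] := pairE _ _ (setIP fI).1.
  move: fI; rewrite Ef !in_setI !pair_in_cut // !inE.
  by case: (a \in P); case: (a \in A); case: (b \in P); case: (b \in A).
rewrite -cardsUI.
have := leq_trans (subset_leq_card sU) (leq_card_setU _ _).
have := subset_leq_card sI; lia.
Qed.

Lemma sum_nbhd_out_le_cut (P X : {set T}) : X \subset P ->
  \sum_(x in X) #|nbhd x :\: P| <= #|cut e P|.
Proof.
move=> XP.
rewrite (eq_bigr (fun x => \sum_(f in cut e P) (x \in f))); last first.
  by move=> x /(subsetP XP) xP; rewrite -card_sep_sum card_cut_at.
rewrite exchange_big /= -sum1_card; apply: leq_sum => f.
rewrite inE => /andP[_ /eqP f1]; rewrite -card_sep_sum -f1.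
apply/subset_leq_card/subsetP => x.
by rewrite !inE => /andP[/(subsetP XP) -> ->].
Qed.

Section NearMinimumCuts.
Variables (c d k : nat).
Hypothesis min_degree : forall x, d <= degree e x.
Hypothesis min_cut : forall S : {set T}, is_cut_side S -> c <= #|cut e S|.
Hypothesis c_le_d : c <= d.
Hypothesis k_ge2 : 2 <= k.

(* The integer form of |dS| <= c + (1 - 4/k) d. *)
Definition near_min (S : {set T}) : bool :=
  nonsingleton S && (k * #|cut e S| + 4 * d <= k * (c + d)).

Definition near_min_edges : {set {set T}} := \bigcup_(S | near_min S) cut e S.

Definition near_min_edges_in (P : {set T}) : {set {set T}} :=
  [set f in near_min_edges | f \subset P].

Definition tiny : nat := maxn 1 (d %/ k).

Lemma near_min_cut_le (S : {set T}) : near_min S -> #|cut e S| <= 2 * d.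
Proof. case/andP => _; nia. Qed.

Lemma near_minC (S : {set T}) : near_min (~: S) = near_min S.
Proof. by rewrite /near_min /nonsingleton cutC setCK (andbC (1 < #|~: S|)). Qed.

Lemma tiny_gt0 : 0 < tiny.
Proof. exact: leq_maxl. Qed.

Lemma tiny_le : k * tiny <= d + k.
Proof.
rewrite /tiny; have := leq_divM d k.
case: (leqP 1 (d %/ k)) => h; nia.
Qed.

Lemma tiny_ge : d <= 2 * k * tiny.
Proof.
rewrite /tiny; have := ltn_ceil d (ltnW k_ge2).
case: (leqP 1 (d %/ k)) => h; nia.
Qed.

Lemma degree_le_nbhd_out (P A : {set T}) (x : T) :
  near_min A -> x \in A -> #|P :&: A| < tiny -> degree e x <= k * #|nbhd x :\: P|.
Proof.
case/andP => /andP[A2 _] A_near xA PA_small.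
have cut_Ax : c <= #|cut e (A :\ x)|.
  apply: min_cut; apply/andP; split.
    by rewrite -card_gt0 (cardsD1 x A) xA in A2 *.
  by apply: contraTneq xA => /setP/(_ x); rewrite !inE eqxx.
have in_A : #|nbhd x :&: A| < #|nbhd x :\: P| + tiny.
  have sub : nbhd x :&: A \subset (nbhd x :\: P) :|: (P :&: A).
    by apply/subsetP => y; rewrite !inE; case: (y \in P); case: (y \in A); case: (e x y).
  have := leq_trans (subset_leq_card sub) (leq_card_setU _ _); lia.
have deg : degree e x = #|nbhd x :&: A| + #|nbhd x :\: A| by rewrite cardsID.
(* These give k deg x <= 2k |N(x) \ P| + (k - 2) d, and d <= deg x. *)
have := card_cutD1 xA; have := min_degree x; have := tiny_le; nia.
Qed.

Lemma near_min_edges_sub : near_min_edges \subset edges e.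
Proof. by apply/bigcupsP => S _; apply: cut_edges. Qed.

Lemma near_min_edges_in_unsplittable (P : {set T}) :
  (forall A, near_min A -> (#|P :&: A| < tiny) || (#|P :\: A| < tiny)) ->
  #|near_min_edges_in P| <= k * #|cut e P|.
Proof.
move=> unsplit.
pose X := [set x in P | [exists A, near_min A && (x \in A) && (#|P :&: A| < tiny)]].
have cover : near_min_edges_in P \subset \bigcup_(x in X) cut e [set x].
  apply/subsetP => f /setIdP[/bigcupP[S S_near fS] fP].
  have fE := subsetP (cut_edges S) f fS.
  case/cutP: fS => a [b [hab Ef aS bS]].
  have [aP bP] : a \in P /\ b \in P by split; apply: (subsetP fP); rewrite Ef !inE eqxx ?orbT.
  case/orP: (unsplit S S_near) => small.
    apply/bigcupP; exists a; last by apply: edge_in_cut1; rewrite // Ef set21.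
    by rewrite inE aP; apply/existsP; exists S; rewrite S_near aS.
  apply/bigcupP; exists b; last by apply: edge_in_cut1; rewrite // Ef set22.
  rewrite inE bP; apply/existsP; exists (~: S).
  by rewrite near_minC S_near inE bS -setDE.
apply: leq_trans (subset_leq_card cover) _.
apply: leq_trans (leq_card_bigcup _ _) _.
apply: leq_trans (_ : _ <= \sum_(x in X) k * #|nbhd x :\: P|) _.
  apply: leq_sum => x /setIdP[_ /existsP[A /andP[/andP[A_near xA] small]]].
  by rewrite card_cut1 //; apply: degree_le_nbhd_out small.
rewrite -big_distrr leq_mul2l sum_nbhd_out_le_cut ?orbT //.
by apply/subsetP => x /setIdP[].
Qed.

Lemma near_min_edges_in_split (P A : {set T}) :
  #|near_min_edges_in P| <=
  #|near_min_edges_in (P :&: A)| + #|near_min_edges_in (P :\: A)| + #|cut e A|.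
Proof.
have cover : near_min_edges_in P \subset
    near_min_edges_in (P :&: A) :|: near_min_edges_in (P :\: A) :|: cut e A.
  apply/subsetP => f /setIdP[fU fP].
  have /edgesP[a [b [hab Ef]]] := subsetP near_min_edges_sub f fU.
  have [aP bP] : a \in P /\ b \in P by split; apply: (subsetP fP); rewrite Ef !inE eqxx ?orbT.
  rewrite Ef in fU *; rewrite !in_setU pair_in_cut // !inE fU !subUset !sub1set !inE aP bP.
  by case: (a \in A); case: (b \in A).
apply: leq_trans (subset_leq_card cover) _.
apply: leq_trans (leq_card_setU _ _) _; rewrite leq_add2r.
exact: leq_card_setU.
Qed.

Lemma near_min_edges_in_bound (P : {set T}) : tiny <= #|P| ->
  tiny * #|near_min_edges_in P| + (2 * k + 1) * (2 * d) * tiny <=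
  tiny * k * #|cut e P| + (2 * k + 1) * (2 * d) * #|P|.
Proof.
have [n] := ubnP #|P|; elim: n P => // n IH P /ltnSE P_n P_big.
case: (boolP [exists A, [&& near_min A, tiny <= #|P :&: A| & tiny <= #|P :\: A|]]).
  case/existsP => A /and3P[A_near PA_big PDA_big].
  have PA := cardsID A P; have t_gt0 := tiny_gt0.
  have IH1 := IH (P :&: A) ltac:(lia) PA_big.
  have IH2 := IH (P :\: A) ltac:(lia) PDA_big.
  have split_edges : tiny * #|near_min_edges_in P| <= tiny *
      (#|near_min_edges_in (P :&: A)| + #|near_min_edges_in (P :\: A)| + #|cut e A|).
    by rewrite leq_mul2l near_min_edges_in_split orbT.
  have split_cuts : tiny * k * (#|cut e (P :&: A)| + #|cut e (P :\: A)|) <=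
      tiny * k * (#|cut e P| + 2 * #|cut e A|).
    by rewrite leq_mul2l card_cutI_cutD orbT.
  have cut_A : tiny * (2 * k + 1) * #|cut e A| <= tiny * (2 * k + 1) * (2 * d).
    by rewrite leq_mul2l near_min_cut_le ?orbT.
  nia.
move/existsPn => no_split.
have unsplit A : near_min A -> (#|P :&: A| < tiny) || (#|P :\: A| < tiny).
  by move=> A_near; move: (no_split A); rewrite A_near /= negb_and -!ltnNge.
have := near_min_edges_in_unsplittable unsplit.
rewrite -(leq_pmul2l tiny_gt0) -mulnA => edges_P.
have : (2 * k + 1) * (2 * d) * tiny <= (2 * k + 1) * (2 * d) * #|P|.
  by rewrite leq_mul2l P_big orbT.
lia.
Qed.

Lemma card_near_min_edges_le : #|near_min_edges| <= 4 * k * (2 * k + 1) * #|T|.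
Proof.
have [T0|/card_gt0P[x _]] := posnP #|T|.
  rewrite /near_min_edges big_pred0 ?cards0 // => S.
  by rewrite /near_min /nonsingleton ltnNge (leq_trans (max_card S)) ?T0.
have tiny_le_T : tiny <= #|T|.
  rewrite geq_max; apply/andP; split; first by apply/card_gt0P; exists x.
  exact: leq_trans (leq_div _ _) (leq_trans (min_degree x) (max_card _)).
have := near_min_edges_in_bound (P := setT); rewrite cardsT => /(_ tiny_le_T).
have -> : near_min_edges_in setT = near_min_edges.
  by apply/setP => f; rewrite inE subsetT andbT.
have -> : cut e setT = set0.
  by apply/setP => f; rewrite in_set0; apply/negP => /cutP[a [b [_ _ _]]]; rewrite inE.
have := tiny_ge; have := tiny_gt0; rewrite cards0; nia.
Qed.

End NearMinimumCuts.

End SimpleGraph.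

Local Open Scope ring_scope.

Lemma near_min_of_le_eps (R : realFieldType) (eps : R) (k w c d : nat) :
  4 <= k%:R * (1 - eps) -> w%:R <= c%:R + eps * d%:R :> R ->
  (k * w + 4 * d <= k * (c + d))%N.
Proof.
move=> k_big w_le; rewrite -(ler_nat R) natrD !natrM natrD.
have scaled_cut : k%:R * w%:R <= k%:R * (c%:R + eps * d%:R) :> R by rewrite ler_wpM2l.
have scaled_deg : 4 * d%:R <= k%:R * (1 - eps) * d%:R :> R by rewrite ler_wpM2r.
lra.
Qed.

Unset Implicit Arguments.

Theorem mainTheorem7 (R : realType) (eps : R) :
  0 < eps < 1 ->
  exists K : R, forall (T : finType) (e : rel T) (c d : nat),
    simple_graph e -> is_min_degree e d -> is_min_cut_value e c ->
    (#|\bigcup_(S : {set T} | nonsingleton S &&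
                  ((#|cut e S|)%:R <= c%:R + eps * d%:R)) cut e S|)%:R
      <= K * (#|T|)%:R.
Proof.
case/andP => eps_gt0 eps_lt1.
have [k k_ge2 k_big] : exists2 k, (2 <= k)%N & 4 <= k%:R * (1 - eps).
  have ge0 : 0 <= 4 / (1 - eps) by rewrite divr_ge0 // subr_ge0 ltW.
  exists (Num.Def.archi_bound (4 / (1 - eps))).+2 => //.
  rewrite -ler_pdivrMr ?subr_gt0 //; apply/ltW/(lt_le_trans (archi_boundP ge0)).
  by rewrite ler_nat leqW.
exists (4 * k * (2 * k + 1))%N%:R.
move=> T e c d [esym eirr] [[x deg_x] min_deg] [[S0 [S0_cut _]] min_cut].
have c_le_d : (c <= d)%N.
  by rewrite -deg_x -card_cut1 //; apply/min_cut/(is_cut_side1 x S0_cut).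
rewrite -natrM ler_nat.
apply: leq_trans (card_near_min_edges_le esym eirr min_deg min_cut c_le_d k_ge2).
apply/subset_leq_card/subsetP => f /bigcupP[S /andP[S_ns S_le] fS].
by apply/bigcupP; exists S; rewrite // /near_min S_ns (near_min_of_le_eps k_big S_le).
Qed.
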